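(* Let $W_n$ be the wheel graph on $n\geq 4$ vertices, i.e. a cycle on $n-1$ vertices together with one additional vertex adjacent to all of them. Let $c_0:V(W_n)\to\mathbb{Z}$ be any initial chip configuration. Then the sequence of configurations $(c_t)_{t\ge0}$ produced by the diffusion process is eventually periodic, i.e. there exist $t\geq 0$ and $p\geq 1$ with $c_{t+p}=c_t$.
   Context: Diffusion process: for a finite simple graph $G$ and a chip configuration $c_t:V(G)\to\mathbb{Z}$ (negative values allowed), the next configuration is defined simultaneously for every vertex $u$ by $c_{t+1}(u)=c_t(u)-|\{w\in N(u): c_t(u)>c_t(w)\}|+|\{w\in N(u): c_t(u)<c_t(w)\}|$. *)

From mathcomp Require Import all_boot all_order all_algebra.
Set Implicit Arguments. Unset Strict Implicit. Unset Printing Implicit Defensive.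
Import Order.TTheory GRing.Theory Num.Theory.
Local Open Scope ring_scope.

Definition simple_graph (V : finType) (e : rel V) : Prop :=
  symmetric e /\ irreflexive e.

Definition diffusion_step (V : finType) (e : rel V) (c : {ffun V -> int})
  : {ffun V -> int} :=
  [ffun u => c u - (#|[set w | e u w && (c w < c u)]|)%:Z
                 + (#|[set w | e u w && (c u < c w)]|)%:Z].

Definition diffusion (V : finType) (e : rel V) (c0 : {ffun V -> int}) (t : nat)
  : {ffun V -> int} := iter t (diffusion_step e) c0.

(* Wheel graph W_n on vertex set 'I_n (intended n >= 4): vertices 0..n-2 form
   the cycle C_{n-1} (i ~ j iff j = i+1 or i = j+1 mod (n-1)), and vertex n-1
   (the hub) is adjacent to all other vertices. *)
Definition wheel_adj (n : nat) : rel 'I_n := fun i j =>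
  let h := n.-1 in
  if (i == h :> nat) then (j != h :> nat)
  else if (j == h :> nat) then true
  else ((((i.+1 %% h)%N == j) || ((j.+1 %% h)%N == i)) && (i != j :> nat))%N.

(** Write the step as [c' u = c u + f u], where the flow
    [f u = \sum_(w ~ u) sgz (c w - c u)] is antisymmetric along edges.
    Hence the total number of chips is conserved, and expanding the square
    gives [\sum c'^2 = \sum c^2 - TV(c) + \sum f^2], where [TV(c)] is the total
    variation of [c] along the (ordered) edges and [\sum f^2 <= |V|^3].
    So the energy [\sum c^2] decreases whenever [TV(c) > |V|^3]. When
    [TV(c) <= |V|^3] instead, the hub is adjacent to every vertex, so all
    values are within [TV(c)] of the hub's value, which together with the
    conserved total bounds every [|c u|], hence the energy. The energy
    therefore stays bounded, the orbit lives in a finite set of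
    configurations, and by pigeonhole it is eventually periodic. *)
From mathcomp Require Import all_boot all_order all_algebra.
From mathcomp Require Import zify ring.
Set Implicit Arguments. Unset Strict Implicit. Unset Printing Implicit Defensive.
Import Order.TTheory GRing.Theory Num.Theory.
Local Open Scope ring_scope.

Lemma fin_sequence_repeats (T : finType) (g : nat -> T) :
  exists i j, (i < j)%N /\ g i = g j.
Proof.
pose s := [seq g i | i <- iota 0 #|T|.+1].
have /uniqPn : ~~ uniq s.
  apply/negP => /card_uniqP s_card.
  by have := max_card (mem s); rewrite s_card size_map size_iota ltnn.
move=> /(_ (g 0%N)) [i [j [lt_ij lt_js]]].
rewrite size_map size_iota in lt_js.
rewrite !(nth_map 0%N) ?size_iota ?(ltn_trans lt_ij) // !nth_iota ?(ltn_trans lt_ij) //.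
by exists i, j.
Qed.

Lemma bounded_iter_eventually_periodic (V : finType)
    (f : {ffun V -> int} -> {ffun V -> int}) (c : {ffun V -> int}) (N : nat) :
  (forall t u, `|iter t f c u| <= N%:Z) ->
  exists t p, (1 <= p)%N /\ iter (t + p)%N f c = iter t f c.
Proof.
move=> bounded.
pose code t : {ffun V -> 'I_(N + N).+1} :=
  [ffun u => inord (absz (iter t f c u + N%:Z))].
have [i [j [lt_ij eq_code]]] := fin_sequence_repeats code.
exists i, (j - i)%N; split; first lia.
rewrite subnKC ?(ltnW lt_ij) //; apply/ffunP => u.
have /(congr1 (fun g : {ffun V -> 'I_(N + N).+1} => nat_of_ord (g u))) := eq_code.
have := bounded i u; have := bounded j u.
rewrite /code /= !ffunE /= => bj bi; rewrite !inordK; lia.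
Qed.

Section Diffusion.
Variables (V : finType) (e : rel V).
Implicit Types c : {ffun V -> int}.

Definition flow c u : int := \sum_(w | e u w) sgz (c w - c u).
Definition mass c : int := \sum_u c u.
Definition energy c : int := \sum_u c u ^+ 2.
Definition variation c : int := \sum_u \sum_(w | e u w) `|c u - c w|.

Lemma diffusion_stepE c u : diffusion_step e c u = c u + flow c u.
Proof.
rewrite ffunE -!sum1dep_card -!natz !natr_sum -addrA; congr (_ + _).
rewrite /flow !(big_mkcond (fun w => e u w && _)) (big_mkcond (e u)) /=.
rewrite -sumrN -big_split /=; apply: eq_bigr => w _.
case: (e u w) => /=; last by rewrite oppr0 addr0.
case: (ltgtP (c w) (c u)) => [lt_wu|lt_uw|->].
- by rewrite ltr0_sgz ?subr_lt0.
- by rewrite gtr0_sgz ?subr_gt0.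
- by rewrite (subrr (c u)).
Qed.

Lemma flow_bound c u : `|flow c u| <= #|V|%:Z.
Proof.
apply: le_trans (ler_norm_sum _ _ _) _.
apply: le_trans (_ : \sum_(w | e u w) 1 <= _).
  by apply: ler_sum => w _; rewrite normr_sgz; case: (_ != 0).
by rewrite -natz -sumr_const [leRHS](bigID (e u)) /= lerDl sumr_ge0.
Qed.

Lemma variation_ge0 c : 0 <= variation c.
Proof. by do 2![apply: sumr_ge0 => ? _]. Qed.

Lemma abs_le_energy c u : `|c u| <= energy c.
Proof.
apply: le_trans (_ : c u ^+ 2 <= _); last first.
  by rewrite /energy (bigD1 u) //= lerDl sumr_ge0 // => w _; rewrite sqr_ge0.
nia.
Qed.

Lemma energy_le_of_abs_le c (r : int) :
  (forall u, `|c u| <= r) -> energy c <= #|V|%:Z * r ^+ 2.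
Proof.
move=> le_r; rewrite -natz mulr_natl -sumr_const.
by apply: ler_sum => u _; have := le_r u; nia.
Qed.

Hypothesis e_sym : symmetric e.

Lemma sum_adj_swap (F : V -> V -> int) :
  \sum_u \sum_(w | e u w) F u w = \sum_u \sum_(w | e u w) F w u.
Proof.
rewrite (exchange_big_dep (fun _ => true)) //=.
by apply: eq_bigr => u _; apply: eq_bigl => w; rewrite e_sym.
Qed.

Lemma sum_flow c : \sum_u flow c u = 0.
Proof.
have : \sum_u flow c u = - \sum_u flow c u.
  rewrite /flow [LHS]sum_adj_swap -sumrN; apply: eq_bigr => u _.
  by rewrite -sumrN; apply: eq_bigr => w _; rewrite -sgzN opprB.
lia.
Qed.

Lemma mass_diffusion_step c : mass (diffusion_step e c) = mass c.
Proof.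
rewrite /mass; under eq_bigr do rewrite diffusion_stepE.
by rewrite big_split /= sum_flow addr0.
Qed.

Lemma sum_mul_flow c : (\sum_u c u * flow c u) *+ 2 = - variation c.
Proof.
have -> : \sum_u c u * flow c u = \sum_u \sum_(w | e u w) c u * sgz (c w - c u).
  by apply: eq_bigr => u _; rewrite mulr_sumr.
rewrite mulr2n [X in X + _]sum_adj_swap /variation -sumrN -big_split /=.
apply: eq_bigr => u _; rewrite -sumrN -big_split /=; apply: eq_bigr => w _.
rewrite -opprB sgzN normrN normrEsg sgrz; ring.
Qed.

Lemma energy_diffusion_step c :
  energy (diffusion_step e c) <= energy c - variation c + #|V|%:Z ^+ 3.
Proof.
have flow_sq_sum : \sum_u flow c u ^+ 2 <= #|V|%:Z ^+ 3.
  apply: le_trans (_ : \sum_(u : V) #|V|%:Z ^+ 2 <= _).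
    by apply: ler_sum => u _; have := flow_bound c u; nia.
  by rewrite sumr_const -mulr_natr natz -exprSr.
rewrite /energy; under eq_bigr do rewrite diffusion_stepE sqrrD.
by rewrite !big_split /= -mulr2n sum_mul_flow lerD2l.
Qed.

Lemma mass_diffusion c0 t : mass (diffusion e c0 t) = mass c0.
Proof. by elim: t => [|t IH] //=; rewrite mass_diffusion_step. Qed.

Section Hub.
Variable h : V.
Hypothesis hub_adj : forall u, u != h -> e u h.

Lemma dist_hub_le_variation c u : `|c u - c h| <= variation c.
Proof.
have [->|u_h] := eqVneq u h; first by rewrite subrr normr0 variation_ge0.
rewrite /variation (bigD1 u) //= (bigD1 h) ?hub_adj //= -addrA lerDl.
by rewrite addr_ge0 ?sumr_ge0 // => v _; rewrite sumr_ge0.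
Qed.

Lemma abs_le_mass_variation c u :
  `|c u| <= `|mass c| + (#|V|%:Z + 1) * variation c.
Proof.
set k := #|V|%:Z.
have k_ge1 : 1 <= k by rewrite lez_nat; apply/card_gt0P; exists h.
have mass_dev : `|k * c h - mass c| <= k * variation c.
  have -> : k * c h - mass c = \sum_v (c h - c v).
    by rewrite big_split /= sumrN sumr_const -mulr_natl natz.
  apply: le_trans (ler_norm_sum _ _ _) _.
  rewrite /k -natz mulr_natl -sumr_const; apply: ler_sum => v _.
  by rewrite distrC dist_hub_le_variation.
have := dist_hub_le_variation c u; have := variation_ge0 c.
nia.
Qed.

Lemma energy_diffusion_bounded c0 :
  exists M, forall t, energy (diffusion e c0 t) <= M.
Proof.
set k := #|V|%:Z.
pose r := `|mass c0| + (k + 1) * k ^+ 3.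
exists (energy c0 + k * r ^+ 2 + k ^+ 3).
elim=> [|t IH] /=.
  by rewrite -addrA lerDl addr_ge0 // mulr_ge0 ?sqr_ge0.
have := energy_diffusion_step (diffusion e c0 t).
have [small|large] := lerP (variation (diffusion e c0 t)) (k ^+ 3); last by lia.
have : energy (diffusion e c0 t) <= k * r ^+ 2.
  apply: energy_le_of_abs_le => u.
  apply: le_trans (abs_le_mass_variation _ u) _.
  by rewrite mass_diffusion lerD2l ler_wpM2l.
have := variation_ge0 (diffusion e c0 t); have : 0 <= energy c0.
  by apply: sumr_ge0 => u _; rewrite sqr_ge0.
lia.
Qed.

Lemma diffusion_eventually_periodic c0 :
  exists t p, (1 <= p)%N /\ diffusion e c0 (t + p)%N = diffusion e c0 t.
Proof.
have [M bounded] := energy_diffusion_bounded c0.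
apply: (@bounded_iter_eventually_periodic _ _ _ (absz M)) => t u.
apply: le_trans (abs_le_energy _ u) _; apply: le_trans (bounded t) _.
by rewrite abszE ler_norm.
Qed.

End Hub.
End Diffusion.

(* Back to nat_scope, so that [t + p] in the statement below is [addn]. *)
Local Close Scope ring_scope.

Lemma wheel_adj_sym n : symmetric (@wheel_adj n).
Proof.
move=> i j; rewrite /wheel_adj.
case: (eqVneq (i : nat) n.-1) => _; case: (eqVneq (j : nat) n.-1) => _ //=.
by rewrite orbC (eq_sym (i : nat)).
Qed.

Lemma wheel_adj_hub n (h : 'I_n) : val h = n.-1 ->
  forall u, u != h -> wheel_adj u h.
Proof.
move=> h_val u u_h; rewrite /wheel_adj h_val eqxx.
by have -> : ((u : nat) == n.-1) = false by rewrite -h_val; apply: negbTE.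
Qed.

Theorem theorem9 (n : nat) (hn : (4 <= n)%N) (c0 : {ffun 'I_n -> int}) :
  exists (t p : nat), (1 <= p)%N /\
    diffusion (@wheel_adj n) c0 (t + p) = diffusion (@wheel_adj n) c0 t.
Proof.
have hub_lt : (n.-1 < n)%N by lia.
have hub_adj := @wheel_adj_hub n (Ordinal hub_lt) erefl.
exact: (@diffusion_eventually_periodic _ _ (@wheel_adj_sym n) _ hub_adj c0).
Qed.
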